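(* Let $\nu\ge0$, $p_{0x}=-2\cosh(2\pi\nu)$, $\theta_\infty\in\mathbb C$, and suppose $$3p_{0x}^2+p_{0x}^3-12p_{0x}\big(1+\cos(\pi\theta_\infty)\big)+4\cos^2(\pi\theta_\infty)+16\cos(\pi\theta_\infty)+8=0$$ with $(\cos\pi\theta_\infty,p_{0x})$ on the portion of this curve between $(-1,-2)$ and $(1,-7)$, i.e. $\cos(\pi\theta_\infty)\in[-1,1]$. Then $\theta_\infty$ is real and $0\le\nu\le\frac2\pi\ln\mathbf G$, where $\mathbf G=\frac{1+\sqrt5}2$ is the golden ratio. Moreover, with $$c_1(\nu)=2+3\cosh(2\pi\nu)-\cosh(3\pi\nu)-3\cosh(\pi\nu),$$ $$c_2(\nu)=96\cosh(\pi\nu)+52\cosh(3\pi\nu)+12\cosh(5\pi\nu)-50-78\cosh(2\pi\nu)-30\cosh(4\pi\nu)-2\cosh(6\pi\nu),$$ one has $c_2(\nu)\ge0$, $\big|c_1(\nu)-\frac i2\sqrt{c_2(\nu)}\big|=1$ (positive square root), and $$\theta_\infty=\pm\frac1\pi\arg\Big(c_1(\nu)-\frac i2\sqrt{c_2(\nu)}\Big)+2m+1\quad\text{for some sign and some }m\in\mathbb Z,$$ where the argument is chosen with $-\pi\le\arg\big(c_1(\nu)-\frac i2\sqrt{c_2(\nu)}\big)\le0$.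
   Context: This is the cubic relation among the monodromy data $p_{0x}=p_{x1}=p_{01}$ and $p_\infty=2\cos(\pi\theta_\infty)$, $\theta_\infty=2\mu$, of the Fuchsian system associated with the Painlevé VI equation $PVI_\mu$, specialized to $p_{0x}=p_{x1}=p_{01}$; the portion between $(\cos\pi\theta_\infty,p_{0x})=(-1,-2)$ and $(1,-7)$ is the part of the branch with $p_{0x}\le-2$ and $-1\le\cos\pi\theta_\infty\le1$. *)

From Stdlib Require Import Reals ZArith.
From Coquelicot Require Export Coquelicot.
Open Scope R_scope.

(* Complex cosine, cos(a+ib) = cos a cosh b - i sin a sinh b. *)
Definition Ccos (z : C) : C :=
  (cos (Re z) * cosh (Im z), - (sin (Re z) * sinh (Im z))).

Definition c1 (nu : R) : R :=
  2 + 3 * cosh (2 * PI * nu) - cosh (3 * PI * nu) - 3 * cosh (PI * nu).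

Definition c2 (nu : R) : R :=
  96 * cosh (PI * nu) + 52 * cosh (3 * PI * nu) + 12 * cosh (5 * PI * nu)
  - 50 - 78 * cosh (2 * PI * nu) - 30 * cosh (4 * PI * nu)
  - 2 * cosh (6 * PI * nu).

Definition wnu (nu : R) : C := (c1 nu, - (1/2) * sqrt (c2 nu)).

Definition golden : R := (1 + sqrt 5) / 2.

(* With h = cosh(pi nu), p0x = -2(2h^2 - 1) and the cubic factors as
   4 (c - (4h^3 - 6h^2 + 1)) (c - (-4h^3 - 6h^2 + 1)) in c = cos(pi theta_inf).
   The second root is below -1, so c = 4h^3 - 6h^2 + 1 = -c1(nu); then c <= 1
   forces h <= 3/2, i.e. e^(pi nu) <= G^2, and c2 = 4 (1 - c1^2) by the
   Chebyshev identities for cosh(k pi nu).  Hence c1 - (i/2) sqrt c2 is the unit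
   number e^(i phi) with phi = -acos c1, and cos(pi theta_inf) = -cos phi pins
   theta_inf down modulo 2.  That theta_inf is real at all comes from
   cos(a + ib) being real and in [-1, 1] only for b = 0. *)

From Stdlib Require Import Reals ZArith Lra Psatz.
Open Scope R_scope.

Lemma cosh_ge_1 (y : R) : 1 <= cosh y.
Proof.
  unfold cosh. rewrite exp_Ropp.
  assert (Hu := exp_pos y). set (u := exp y) in *.
  assert (Hsq : 0 <= (u - 1) ^ 2 * / u)
    by (apply Rmult_le_pos; [apply pow2_ge_0 | apply Rlt_le, Rinv_0_lt_compat; lra]).
  replace ((u - 1) ^ 2 * / u) with (u - 2 + / u) in Hsq by (field; lra).
  lra.
Qed.

Lemma cosh_eq_1 (y : R) : cosh y = 1 -> y = 0.
Proof.
  unfold cosh. rewrite exp_Ropp. intro H.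
  assert (Hu := exp_pos y). set (u := exp y) in *.
  assert (Hu1 : u = 1).
  { assert (Hq : (u - 1) ^ 2 = (u - 2 + / u) * u) by (field; lra).
    replace (u - 2 + / u) with 0 in Hq by lra. nra. }
  rewrite <- (ln_exp y). fold u. rewrite Hu1. apply ln_1.
Qed.

Lemma sinh_eq_0 (y : R) : sinh y = 0 -> y = 0.
Proof.
  intro H. rewrite <- sinh_0 in H.
  destruct (Rtotal_order y 0) as [Hy | [Hy | Hy]]; [| exact Hy |].
  - apply sinh_lt in Hy. lra.
  - apply sinh_lt in Hy. lra.
Qed.

Lemma cosh_add_sub (x y : R) : cosh (x + y) + cosh (x - y) = 2 * cosh x * cosh y.
Proof.
  unfold cosh, Rminus. rewrite !Ropp_plus_distr, !exp_plus, !exp_Ropp.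
  assert (exp x <> 0) by (apply Rgt_not_eq, exp_pos).
  assert (exp y <> 0) by (apply Rgt_not_eq, exp_pos).
  field; auto.
Qed.

Section ChebyshevCosh.

Variable x : R.

Let h := cosh x.

Lemma cosh_succ_mult (k : R) :
  cosh ((k + 1) * x) = 2 * h * cosh (k * x) - cosh ((k - 1) * x).
Proof.
  assert (H := cosh_add_sub (k * x) x). unfold h.
  replace (k * x + x) with ((k + 1) * x) in H by ring.
  replace (k * x - x) with ((k - 1) * x) in H by ring.
  lra.
Qed.

Lemma cosh_2x : cosh (2 * x) = 2 * h ^ 2 - 1.
Proof.
  replace 2 with (1 + 1) at 1 by ring. rewrite cosh_succ_mult.
  replace ((1 - 1) * x) with 0 by ring. rewrite Rmult_1_l, cosh_0. fold h. ring.
Qed.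

Lemma cosh_3x : cosh (3 * x) = 4 * h ^ 3 - 3 * h.
Proof.
  replace 3 with (2 + 1) at 1 by ring. rewrite cosh_succ_mult, cosh_2x.
  replace ((2 - 1) * x) with x by ring. fold h. ring.
Qed.

Lemma cosh_4x : cosh (4 * x) = 8 * h ^ 4 - 8 * h ^ 2 + 1.
Proof.
  replace 4 with (3 + 1) at 1 by ring. rewrite cosh_succ_mult, cosh_3x.
  replace ((3 - 1) * x) with (2 * x) by ring. rewrite cosh_2x. ring.
Qed.

Lemma cosh_5x : cosh (5 * x) = 16 * h ^ 5 - 20 * h ^ 3 + 5 * h.
Proof.
  replace 5 with (4 + 1) at 1 by ring. rewrite cosh_succ_mult, cosh_4x.
  replace ((4 - 1) * x) with (3 * x) by ring. rewrite cosh_3x. ring.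
Qed.

Lemma cosh_6x : cosh (6 * x) = 32 * h ^ 6 - 48 * h ^ 4 + 18 * h ^ 2 - 1.
Proof.
  replace 6 with (5 + 1) at 1 by ring. rewrite cosh_succ_mult, cosh_5x.
  replace ((5 - 1) * x) with (4 * x) by ring. rewrite cosh_4x. ring.
Qed.

End ChebyshevCosh.

Lemma c1_cosh (nu : R) :
  c1 nu = - 4 * cosh (PI * nu) ^ 3 + 6 * cosh (PI * nu) ^ 2 - 1.
Proof.
  unfold c1. rewrite !Rmult_assoc, cosh_2x, cosh_3x. ring.
Qed.

Lemma c2_c1 (nu : R) : c2 nu = 4 * (1 - c1 nu ^ 2).
Proof.
  rewrite c1_cosh. unfold c2.
  rewrite !Rmult_assoc, cosh_2x, cosh_3x, cosh_4x, cosh_5x, cosh_6x. ring.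
Qed.

Section WnuOnUnitCircle.

Variable nu : R.

Hypothesis c1_bound : -1 <= c1 nu <= 1.

Lemma c2_ge_0 : 0 <= c2 nu.
Proof. rewrite c2_c1. nra. Qed.

Lemma wnu_on_unit_circle : wnu nu = (c1 nu, - sqrt (1 - (c1 nu)²)).
Proof.
  unfold wnu. f_equal. rewrite c2_c1.
  replace (4 * (1 - c1 nu ^ 2)) with (2² * (1 - (c1 nu)²)) by (unfold Rsqr; ring).
  rewrite sqrt_mult_alt, sqrt_Rsqr by (unfold Rsqr; lra). field.
Qed.

Lemma Cmod_wnu : Cmod (wnu nu) = 1.
Proof.
  rewrite wnu_on_unit_circle. unfold Cmod. simpl.
  transitivity (sqrt 1); [f_equal | apply sqrt_1].
  assert (Hs := sqrt_sqrt (1 - (c1 nu)²) ltac:(unfold Rsqr; nra)).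
  unfold Rsqr in *. nra.
Qed.

Lemma wnu_polar :
  -PI <= - acos (c1 nu) <= 0 /\
  cos (- acos (c1 nu)) = Re (wnu nu) /\ sin (- acos (c1 nu)) = Im (wnu nu).
Proof.
  assert (Hacos := acos_bound (c1 nu)).
  rewrite wnu_on_unit_circle, cos_neg, sin_neg, cos_acos, sin_acos by exact c1_bound.
  simpl. repeat split; lra.
Qed.

End WnuOnUnitCircle.

Lemma Ccos_real_bounded (z : C) :
  Im (Ccos z) = 0 -> -1 <= Re (Ccos z) <= 1 -> Im z = 0.
Proof.
  destruct z as [a b]. unfold Ccos. simpl. intros Him Hre.
  destruct (Rmult_integral (sin a) (sinh b)) as [Hs | Hs]; [lra | |].
  - (* sin a = 0, so |cos a| = 1 and the bound forces cosh b = 1 *)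
    apply cosh_eq_1.
    assert (Hsc := sin2_cos2 a). unfold Rsqr in Hsc. rewrite Hs in Hsc.
    assert (Hc := cosh_ge_1 b). nra.
  - exact (sinh_eq_0 _ Hs).
Qed.

Lemma Ccos_RtoC (x : R) : Ccos (RtoC x) = RtoC (cos x).
Proof.
  unfold Ccos, RtoC. simpl. rewrite cosh_0, sinh_0. f_equal; ring.
Qed.

Definition monodromy_cubic (p c : R) : R :=
  3 * p ^ 2 + p ^ 3 - 12 * p * (1 + c) + 4 * c ^ 2 + 16 * c + 8.

Lemma monodromy_cubic_RtoC (p c : R) :
  (3 * RtoC p ^ 2 + RtoC p ^ 3 - 12 * RtoC p * (1 + RtoC c)
   + 4 * RtoC c ^ 2 + 16 * RtoC c + 8)%C = RtoC (monodromy_cubic p c).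
Proof.
  apply injective_projections; simpl; unfold monodromy_cubic; ring.
Qed.

Lemma monodromy_cubic_factor (h c : R) :
  monodromy_cubic (-2 * (2 * h ^ 2 - 1)) c
  = 4 * (c - (4 * h ^ 3 - 6 * h ^ 2 + 1)) * (c - (- 4 * h ^ 3 - 6 * h ^ 2 + 1)).
Proof. unfold monodromy_cubic. ring. Qed.

Lemma monodromy_cubic_root (h c : R) :
  1 <= h -> -1 <= c -> monodromy_cubic (-2 * (2 * h ^ 2 - 1)) c = 0 ->
  c = 4 * h ^ 3 - 6 * h ^ 2 + 1.
Proof.
  intros Hh Hc Hroot. rewrite monodromy_cubic_factor in Hroot.
  destruct (Rmult_integral _ _ Hroot) as [H | H].
  - destruct (Rmult_integral _ _ H); lra.
  - nra.
Qed.

Lemma le_3_2_of_cubic_le_1 (h : R) :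
  0 < h -> 4 * h ^ 3 - 6 * h ^ 2 + 1 <= 1 -> h <= 3 / 2.
Proof.
  intros Hh Hle. apply Rnot_lt_le. intro Hgt.
  assert (0 < (h - 3 / 2) * (h * h)) by (apply Rmult_lt_0_compat; nra).
  nra.
Qed.

Lemma cosh_le_3_2 (x : R) : cosh x <= 3 / 2 -> x <= 2 * ln golden.
Proof.
  unfold cosh. rewrite exp_Ropp. intro Hx.
  assert (Hu := exp_pos x). set (u := exp x) in *.
  assert (Hs5 := sqrt_sqrt 5 ltac:(lra)).
  assert (Hs5p := sqrt_pos 5).
  assert (Hg : golden * golden = (3 + sqrt 5) / 2) by (unfold golden; nra).
  assert (Hgp : 0 < golden) by (unfold golden; lra).
  assert (Hquad : u * u - 3 * u + 1 <= 0).
  { assert (Hi : u * / u = 1) by (field; lra). nra. }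
  assert (Hu_le : u <= golden * golden) by (rewrite Hg; nra).
  replace x with (ln u) by apply ln_exp.
  replace (2 * ln golden) with (ln (golden * golden)) by (rewrite ln_mult; lra).
  apply ln_le; lra.
Qed.

Lemma cos_eq_opp_cos (a b : R) :
  cos a = - cos b ->
  exists (s : R) (k : Z), (s = 1 \/ s = -1) /\ a = s * b + (2 * IZR k + 1) * PI.
Proof.
  intro H.
  assert (Hdiff : cos a - cos (b + PI) = 0) by (rewrite neg_cos; lra).
  rewrite form2 in Hdiff.
  destruct (Rmult_integral _ _ Hdiff) as [H0 | H0].
  - destruct (Rmult_integral _ _ H0) as [H1 | H1]; [lra |].
    destruct (sin_eq_0_0 _ H1) as [k Hk].
    exists 1, k. split; [now left |]. lra.
  - destruct (sin_eq_0_0 _ H0) as [k Hk].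
    exists (-1), (k - 1)%Z. split; [now right |]. rewrite minus_IZR. lra.
Qed.

Theorem lemma2 (nu p0x : R) (thinf : C) :
  0 <= nu ->
  p0x = -2 * cosh (2 * PI * nu) ->
  Im (Ccos (RtoC PI * thinf)) = 0 ->
  -1 <= Re (Ccos (RtoC PI * thinf)) <= 1 ->
  (3 * RtoC p0x ^ 2 + RtoC p0x ^ 3
   - 12 * RtoC p0x * (1 + Ccos (RtoC PI * thinf))
   + 4 * Ccos (RtoC PI * thinf) ^ 2 + 16 * Ccos (RtoC PI * thinf) + 8)%C = 0%C ->
  Im thinf = 0 /\
  nu <= 2 / PI * ln golden /\
  0 <= c2 nu /\
  Cmod (wnu nu) = 1 /\
  exists (phi : R) (s : R) (m : Z),
    (* phi = arg (wnu nu), with the branch -PI <= arg <= 0 *)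
    -PI <= phi <= 0 /\ cos phi = Re (wnu nu) /\ sin phi = Im (wnu nu) /\
    (s = 1 \/ s = -1) /\
    thinf = RtoC (s * phi / PI + 2 * IZR m + 1).
Proof.
  intros _ Hp Him Hre Hcubic.
  assert (HPI := PI_RGT_0).
  assert (Hreal : Im thinf = 0).
  { assert (H := Ccos_real_bounded _ Him Hre). rewrite im_scal_l in H. nra. }
  assert (Hth : thinf = RtoC (Re thinf)) by (destruct thinf; simpl in *; now subst).
  set (a := Re thinf) in *.
  rewrite Hth, <- (RtoC_mult PI a), Ccos_RtoC in Hre, Hcubic.
  rewrite monodromy_cubic_RtoC in Hcubic. apply RtoC_inj in Hcubic.
  simpl in Hre. set (c := cos (PI * a)) in *.
  rewrite Rmult_assoc, cosh_2x in Hp. subst p0x.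
  set (h := cosh (PI * nu)) in *.
  assert (Hh : 1 <= h) by apply cosh_ge_1.
  assert (Hc := monodromy_cubic_root h c Hh (proj1 Hre) Hcubic).
  assert (Hc1 : c1 nu = - c) by (rewrite c1_cosh; fold h; lra).
  assert (Hb : -1 <= c1 nu <= 1) by lra.
  destruct (cos_eq_opp_cos (PI * a) (- acos (c1 nu))) as [s [k [Hs Hk]]].
  { rewrite cos_neg, cos_acos by exact Hb. fold c. lra. }
  split; [exact Hreal |]. split; [| split; [exact (c2_ge_0 _ Hb) |]].
  - assert (Hh32 : h <= 3 / 2) by (apply le_3_2_of_cubic_le_1; lra).
    apply (Rmult_le_reg_l PI); [lra |].
    replace (PI * (2 / PI * ln golden)) with (2 * ln golden) by (field; lra).
    exact (cosh_le_3_2 _ Hh32).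
  - split; [exact (Cmod_wnu _ Hb) |].
    exists (- acos (c1 nu)), s, k.
    destruct (wnu_polar _ Hb) as [Hphi [Hcos Hsin]].
    do 4 (split; [assumption |]).
    rewrite Hth. f_equal. apply (Rmult_eq_reg_l PI); [| lra].
    rewrite Hk. field. lra.
Qed.
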